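(* Let $B_{m,n}\subset\operatorname{GL}(m\mathds{1}+nP)$ be the parabolic subgroup of block upper triangular matrices $\begin{pmatrix}F&C&C'\\0&D&D'\\0&E&D+E'\end{pmatrix}$. Identify $(\mathbb{G}'_a)^{mn}$ with $\operatorname{Mat}_{m\times n}(A)$. Then the multiplication map $(\mathbb{G}'_a)^{mn}\times B_{m,n}\to\operatorname{GL}(m\mathds{1}+nP)$, $B,(F,C,D,E)\mapsto\begin{pmatrix}I_m&0&0\\ B'&I_n&0\\ B&0&I_n\end{pmatrix}\begin{pmatrix}F&C&C'\\0&D&D'\\0&E&D+E'\end{pmatrix}$, is an isomorphism of schemes.
   Context: $\operatorname{Ver}_4^+$ is the category of $k[d]/d^2$-modules ($\operatorname{char}k=2$, $d$ primitive) with braiding $c(v\otimes w)=w\otimes v+dw\otimes dv$, and $x'=dx$. For a commutative algebra $A$ in $\operatorname{Ver}_4^+$, $\operatorname{GL}(m\mathds{1}+nP)(A)$ is the group of invertible matrices $\begin{pmatrix}F&C&C'\\ B'&D&D'\\ B&E&D+E'\end{pmatrix}$ under ordinary matrix multiplication. Here $F$ is an $m\times m$ matrix with $F'=0$, $D,E\in\operatorname{Mat}_{n\times n}(A)$, $C\in\operatorname{Mat}_{m\times n}(A)$ and $B\in\operatorname{Mat}_{n\times m}(A)$. Such a matrix is invertible iff $F$ and $D$ are invertible. $\mathbb{G}'_a$ is the group scheme $A\mapsto(A,+)$. *)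

From HB Require Import structures.
From mathcomp Require Import all_boot all_order all_algebra.
Set Implicit Arguments. Unset Strict Implicit. Unset Printing Implicit Defensive.
Import GRing.Theory.
Local Open Scope ring_scope.

(* A commutative algebra in Ver_4^+ (char k = 2): a k-algebra A with a
   k-linear operator d (the action of d, x' := d x) such that
   d^2 = 0, the unit is d-invariant, d is primitive (Leibniz rule on
   products, since d acts on A (x) A by d (x) 1 + 1 (x) d), and the
   multiplication is commutative w.r.t. the braiding
   c(v (x) w) = w (x) v + dw (x) dv, i.e. a b = b a + (d b)(d a). *)
Definition Ver4_comm_alg (k : fieldType) (A : algType k) (d : A -> A) : Prop :=
  [/\ forall (c : k) (a b : A), d (c *: a + b) = c *: d a + d b,
      forall a : A, d (d a) = 0,
      d 1 = 0,
      forall a b : A, d (a * b) = d a * b + a * d b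
    & forall a b : A, a * b = b * a + d b * d a].

Section GL.
Variables (k : fieldType) (A : algType k) (d : A -> A) (m n : nat).

Definition glmx (F : 'M[A]_m) (C : 'M[A]_(m, n)) (B : 'M[A]_(n, m))
  (D E : 'M[A]_n) : 'M[A]_(m + (n + n)) :=
  block_mx F (row_mx C (map_mx d C))
           (col_mx (map_mx d B) B)
           (block_mx D (map_mx d D) E (D + map_mx d E)).

Definition invertible_mx (M : 'M[A]_(m + (n + n))) : Prop :=
  exists N : 'M[A]_(m + (n + n)), M *m N = 1%:M /\ N *m M = 1%:M.

(* A-points of GL(m 1 + n P): invertible matrices of the above form with F' = 0. *)
Definition in_GL (M : 'M[A]_(m + (n + n))) : Prop :=
  (exists F C B D E, map_mx d F = 0 /\ M = glmx F C B D E) /\ invertible_mx M.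

Definition in_Bmn (M : 'M[A]_(m + (n + n))) : Prop :=
  (exists F C D E, map_mx d F = 0 /\ M = glmx F C 0 D E) /\ invertible_mx M.

Definition lowmx (B : 'M[A]_(n, m)) : 'M[A]_(m + (n + n)) :=
  block_mx 1%:M 0 (col_mx (map_mx d B) B) 1%:M.

End GL.

From HB Require Import structures.
From mathcomp Require Import all_boot all_order all_algebra.
From mathcomp Require Import boolp.
Set Implicit Arguments. Unset Strict Implicit. Unset Printing Implicit Defensive.
Import GRing.Theory.
Local Open Scope ring_scope.
Local Open Scope quotient_scope.

(* Multiplying by [lowmx d X] adds [X *m F] to the B-block of an element of GL
   (the derived entries follow since d is a derivation, F' = 0 and 2 = 0).
   Hence the map is bijective once the F-block of every element of GL is
   invertible: X := B F^-1 is the only choice that clears the B-block.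
   Invertibility of F is read off modulo the ideal generated by d A. The
   quotient is commutative and there the matrix is [[F, C, 0], [0, D, 0],
   [B, E, D]]; a right inverse of it makes D invertible, which kills the
   (2, 1) block of that inverse and leaves a right inverse of F, so det F is a
   unit modulo the ideal. As F has entries in the commutative subring ker d,
   det F and adj F make sense in A, and det F is a unit of A because every
   1 - sum d(a_i) b_i is invertible: each d(a_i) is central of square 0. *)

Lemma block_mx_rinv_ul_rinv (R : comPzRingType) m n (F : 'M[R]_m)
    (C : 'M[R]_(m, n)) (B : 'M[R]_(n, m)) (D E : 'M[R]_n)
    (N : 'M[R]_(m + (n + n))) :
  block_mx F (row_mx C 0) (col_mx 0 B) (block_mx D 0 E D) *m N = 1%:M ->
  exists G, F *m G = 1%:M.
Proof.
rewrite -[N]submxK -[dlsubmx N]vsubmxK -[drsubmx N]submxK -[ursubmx N]hsubmxK.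
set G := ulsubmx N; set N1 := usubmx _; set N11 := ulsubmx (drsubmx N).
rewrite mulmx_block mul_row_col mul_col_mx mul_block_col mul_col_row.
rewrite mulmx_block (scalar_mx_block m (n + n)) (scalar_mx_block n n).
rewrite add_col_mx add_block_mx.
case/eq_block_mx=> FG _ + /eq_block_mx[DN11 _ _ _].
rewrite -col_mx0 => /eq_col_mx[DN1 _].
rewrite !mul0mx !add0r !addr0 in FG DN1 DN11.
have N1_0 : N1 = 0 by rewrite -[N1]mul1mx -(mulmx1C DN11) -mulmxA DN1 mulmx0.
by exists G; rewrite N1_0 mulmx0 addr0 in FG.
Qed.

(* (u - c b)^-1 = w (1 + c b w), a truncated geometric series: (c b w)^2 = 0. *)
Lemma unit_subr_central_sqr0 (R : pzRingType) (c b u w : R) :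
  (forall y, y * c = c * y) -> c * c = 0 -> u * w = 1 -> w * u = 1 ->
  (u - c * b) * (w + c * w * b * w) = 1 /\
  (w + c * w * b * w) * (u - c * b) = 1.
Proof.
move=> cC cc uw wu.
have cyc y : c * y * c = 0 by rewrite -mulrA cC mulrA cc mul0r.
split; rewrite ?mulrBl ?mulrDr ?mulrDl ?mulrBr ?mulrN.
- have -> : u * (c * w * b * w) = c * b * w.
    by rewrite !mulrA cC -(mulrA c u w) uw mulr1.
  have -> : c * b * (c * w * b * w) = 0 by rewrite !mulrA cyc !mul0r.
  by rewrite uw addr0 addrK.
- have -> : c * w * b * w * u = c * w * b by rewrite -mulrA wu mulr1.
  have -> : w * (c * b) = c * w * b by rewrite mulrA cC.
  have -> : c * w * b * w * (c * b) = 0.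
    by rewrite !mulrA -(mulrA c w b) -(mulrA c (w * b) w) cyc mul0r.
  by rewrite wu oppr0 addr0 addrK.
Qed.

Section Ver4Algebra.
Variables (k : fieldType) (A : algType k) (d : A -> A).
Hypothesis hA : Ver4_comm_alg d.

Lemma d_is_zmod_morphism : zmod_morphism d.
Proof.
by case: hA => lin _ _ _ _ x y; rewrite addrC -scaleN1r lin scaleN1r addrC.
Qed.
HB.instance Definition _ := GRing.isZmodMorphism.Build A A d d_is_zmod_morphism.

Lemma dM a b : d (a * b) = d a * b + a * d b. Proof. by case: hA. Qed.
Lemma d1 : d 1 = 0. Proof. by case: hA. Qed.
Lemma dd0 a : d (d a) = 0. Proof. by case: hA. Qed.
Lemma mulrC_d a b : a * b = b * a + d b * d a. Proof. by case: hA. Qed.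

Lemma d_central a x : x * d a = d a * x.
Proof. by rewrite mulrC_d dd0 mul0r addr0. Qed.
Lemma kerd_central a x : d a = 0 -> a * x = x * a.
Proof. by move=> da0; rewrite mulrC_d da0 mulr0 addr0. Qed.
Lemma d_sqr0 a : d a * d a = 0.
Proof. by apply: (addrI (a * a)); rewrite addr0 -mulrC_d. Qed.

(* As d A is central, the ideal it generates consists of the sums of
   products d a * b. *)
Definition dideal (x : A) : Prop :=
  exists s : seq (A * A), x = \sum_(p <- s) d p.1 * p.2.

Lemma dideal0 : dideal 0. Proof. by exists [::]; rewrite big_nil. Qed.
Lemma didealD x y : dideal x -> dideal y -> dideal (x + y).
Proof. by move=> [s ->] [t ->]; exists (s ++ t); rewrite big_cat. Qed.
Lemma didealMl r x : dideal x -> dideal (r * x).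
Proof.
move=> [s ->]; exists [seq (p.1, r * p.2) | p <- s]; rewrite big_map mulr_sumr.
by apply: eq_bigr => p _; rewrite mulrA d_central -mulrA.
Qed.
Lemma didealMr r x : dideal x -> dideal (x * r).
Proof.
move=> [s ->]; exists [seq (p.1, p.2 * r) | p <- s]; rewrite big_map mulr_suml.
by apply: eq_bigr => p _; rewrite mulrA.
Qed.
Lemma didealN x : dideal x -> dideal (- x).
Proof. by move/(didealMr (-1)); rewrite mulrN1. Qed.
Lemma dideal_d x : dideal (d x).
Proof. by exists [:: (x, 1)]; rewrite big_seq1 mulr1. Qed.
Lemma dideal_commutator x y : dideal (x * y - y * x).
Proof.
by exists [:: (y, d x)]; rewrite big_seq1 [x * y]mulrC_d addrAC subrr add0r.
Qed.

Lemma dideal_subr_unit x :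
  dideal x -> exists w, (1 - x) * w = 1 /\ w * (1 - x) = 1.
Proof.
move=> [s ->]; elim: s => [|p s [w [xw wx]]].
  by exists 1; rewrite big_nil subr0 mulr1.
rewrite big_cons opprD addrA addrAC; exists (w + d p.1 * w * p.2 * w).
by apply: unit_subr_central_sqr0 => //; [apply: d_central | apply: d_sqr0].
Qed.

Definition dequiv (x y : A) : bool := `[< dideal (x - y) >].

Lemma dequiv_is_equiv : equiv_class_of dequiv.
Proof.
split=> [x | x y | y x z]; rewrite /dequiv.
- by apply/asboolP; rewrite subrr; apply: dideal0.
- by apply/asboolP/asboolP => /didealN; rewrite opprB.
- move=> /asboolP xy /asboolP yz; apply/asboolP.
  by rewrite -(subrK y x) -addrA; apply: didealD.
Qed.
Canonical dequiv_equiv := EquivRelPack dequiv_is_equiv.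
Canonical dequiv_encModRel := defaultEncModRel dequiv.

Definition Abar := {eq_quot dequiv}.
HB.instance Definition _ : EqQuotient A dequiv Abar := EqQuotient.on Abar.
HB.instance Definition _ := Choice.on Abar.

Definition pibar (x : A) : Abar := \pi_Abar x.

Lemma pibarP x y : pibar x = pibar y <-> dideal (x - y).
Proof.
by split=> [/(@eqquotP _ _ Abar)/asboolP | /asboolP/(@eqquotP _ _ Abar)].
Qed.
Lemma pibar_repr (u : Abar) : pibar (repr u) = u.
Proof. exact: reprK. Qed.
Lemma dideal_repr x : dideal (repr (pibar x) - x).
Proof. by apply/pibarP; rewrite pibar_repr. Qed.

Definition addbar (u v : Abar) : Abar := pibar (repr u + repr v).
Definition oppbar (u : Abar) : Abar := pibar (- repr u).
Definition mulbar (u v : Abar) : Abar := pibar (repr u * repr v).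

Lemma pibarD x y : pibar (x + y) = addbar (pibar x) (pibar y).
Proof.
apply/pibarP; set x1 := repr (pibar x); set y1 := repr (pibar y).
have -> : x + y - (x1 + y1) = - ((x1 - x) + (y1 - y)).
  by rewrite [RHS]opprD !opprB addrACA opprD.
by apply/didealN/didealD; apply: dideal_repr.
Qed.
Lemma pibarN x : pibar (- x) = oppbar (pibar x).
Proof. by apply/pibarP; rewrite opprK addrC; apply: dideal_repr. Qed.
Lemma pibarM x y : pibar (x * y) = mulbar (pibar x) (pibar y).
Proof.
apply/pibarP; set x1 := repr (pibar x); set y1 := repr (pibar y).
have -> : x * y - x1 * y1 = - ((x1 - x) * y1 + x * (y1 - y)).
  by rewrite mulrBl mulrBr addrA subrK opprB.
apply/didealN/didealD; [apply: didealMr | apply: didealMl].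
all: exact: dideal_repr.
Qed.

Lemma addbarA : associative addbar.
Proof.
move=> u v w; rewrite -(pibar_repr u) -(pibar_repr v) -(pibar_repr w).
by rewrite -!pibarD addrA.
Qed.
Lemma addbarC : commutative addbar.
Proof.
by move=> u v; rewrite -(pibar_repr u) -(pibar_repr v) -!pibarD addrC.
Qed.
Lemma add0bar : left_id (pibar 0) addbar.
Proof. by move=> u; rewrite -(pibar_repr u) -pibarD add0r. Qed.
Lemma addNbar : left_inverse (pibar 0) oppbar addbar.
Proof. by move=> u; rewrite -(pibar_repr u) -pibarN -pibarD addNr. Qed.
HB.instance Definition _ :=
  GRing.isZmodule.Build Abar addbarA addbarC add0bar addNbar.

Lemma mulbarA : associative mulbar.
Proof.
move=> u v w; rewrite -(pibar_repr u) -(pibar_repr v) -(pibar_repr w).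
by rewrite -!pibarM mulrA.
Qed.
Lemma mulbarC : commutative mulbar.
Proof.
move=> u v; rewrite -(pibar_repr u) -(pibar_repr v) -!pibarM.
by apply/pibarP; apply: dideal_commutator.
Qed.
Lemma mul1bar : left_id (pibar 1) mulbar.
Proof. by move=> u; rewrite -(pibar_repr u) -pibarM mul1r. Qed.
Lemma mulbarDl : left_distributive mulbar addbar.
Proof.
move=> u v w; rewrite -(pibar_repr u) -(pibar_repr v) -(pibar_repr w).
by rewrite -[addbar (pibar _) _]pibarD -!pibarM -pibarD mulrDl.
Qed.
HB.instance Definition _ :=
  GRing.Zmodule_isComPzRing.Build Abar mulbarA mulbarC mul1bar mulbarDl.

Lemma pibar_is_zmod_morphism : zmod_morphism pibar.
Proof. by move=> x y; rewrite pibarD pibarN. Qed.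
HB.instance Definition _ :=
  GRing.isZmodMorphism.Build A Abar pibar pibar_is_zmod_morphism.
Lemma pibar_is_monoid_morphism : monoid_morphism pibar.
Proof. by split=> // x y; rewrite pibarM. Qed.
HB.instance Definition _ :=
  GRing.isMonoidMorphism.Build A Abar pibar pibar_is_monoid_morphism.

Lemma pibar_d x : pibar (d x) = 0.
Proof.
by rewrite -(rmorph0 pibar); apply/pibarP; rewrite subr0; apply: dideal_d.
Qed.

Lemma map_pibar_d p q (X : 'M[A]_(p, q)) : map_mx pibar (map_mx d X) = 0.
Proof. by apply/matrixP => i j; rewrite !mxE pibar_d. Qed.

Definition kerd : {pred A} := [pred x | d x == 0].

Lemma kerd_subring_closed : subring_closed kerd.
Proof.
split=> [|x y|x y]; rewrite !inE ?d1 // => /eqP dx /eqP dy.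
  by rewrite raddfB /= dx dy subrr.
by rewrite dM dx dy mulr0 mul0r addr0.
Qed.
HB.instance Definition _ :=
  GRing.isSubringClosed.Build A kerd kerd_subring_closed.

Record kerdT := KerdT { kerd_val :> A; _ : kerd_val \in kerd }.
HB.instance Definition _ := [isSub for kerd_val].
HB.instance Definition _ := [Choice of kerdT by <:].
HB.instance Definition _ :=
  GRing.SubChoice_isSubPzRing.Build A kerd kerdT kerd_subring_closed.

Lemma kerdT_mulC : commutative (@GRing.mul kerdT).
Proof.
by move=> x y; apply: val_inj; apply: kerd_central; apply/eqP; exact: (valP x).
Qed.
HB.instance Definition _ :=
  GRing.PzRing_hasCommutativeMul.Build kerdT kerdT_mulC.

Lemma kerd_mx_lift p q (F : 'M[A]_(p, q)) :
  map_mx d F = 0 -> exists F0 : 'M[kerdT]_(p, q), F = map_mx val F0.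
Proof.
move=> /matrixP dF; have Fij i j : F i j \in kerd.
  by rewrite inE; apply/eqP; have := dF i j; rewrite !mxE.
by exists (\matrix_(i, j) KerdT (Fij i j)); apply/matrixP => i j; rewrite !mxE.
Qed.

Lemma kerd_unit_of_pibar (a : A) (q : Abar) :
  d a = 0 -> pibar a * q = 1 -> exists g, a * g = 1 /\ g * a = 1.
Proof.
move=> da0; rewrite -(pibar_repr q) -rmorphM -(rmorph1 pibar) => /esym/pibarP.
move=> /dideal_subr_unit[w []]; rewrite subKr => aqw _.
have ag : a * (repr q * w) = 1 by rewrite mulrA.
by exists (repr q * w); rewrite -(kerd_central _ da0).
Qed.

Lemma kerd_mx_inv n (F : 'M[A]_n) (G : 'M[Abar]_n) :
  map_mx d F = 0 -> map_mx pibar F *m G = 1%:M ->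
  exists H, F *m H = 1%:M /\ H *m F = 1%:M.
Proof.
move=> /kerd_mx_lift[F0 ->] /(congr1 determinant); rewrite det_mulmx det1.
rewrite -map_mx_comp det_map_mx /=.
move=> /(kerd_unit_of_pibar (eqP (valP (\det F0)))).
case=> g [detg gdet]; set H := map_mx val (\adj F0).
have FH : map_mx val F0 *m (H *m g%:M) = 1%:M.
  by rewrite mulmxA -map_mxM mul_mx_adj map_scalar_mx -scalar_mxM detg.
have HF : g%:M *m H *m map_mx val F0 = 1%:M.
  by rewrite -mulmxA -map_mxM mul_adj_mx map_scalar_mx -scalar_mxM gdet.
have gH : H *m g%:M = g%:M *m H by rewrite -[RHS]mulmx1 -FH !mulmxA HF mul1mx.
by exists (H *m g%:M); split; [exact: FH | rewrite gH; exact: HF].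
Qed.

Lemma glmx_ul_invertible m n F C B (D E : 'M[A]_n) (N : 'M[A]_(m + (n + n))) :
  map_mx d F = 0 -> glmx d F C B D E *m N = 1%:M ->
  exists G, F *m G = 1%:M /\ G *m F = 1%:M.
Proof.
move=> dF /(congr1 (map_mx pibar)); rewrite map_mxM map_mx1 /glmx.
rewrite !map_block_mx map_row_mx map_col_mx map_mxD !map_pibar_d addr0.
by case/block_mx_rinv_ul_rinv=> G /(kerd_mx_inv dF).
Qed.

Variables (m n : nat).
Hypothesis chk : (2 \in [pchar k])%N.

Lemma map_mx_dM p q r (X : 'M[A]_(p, q)) (Y : 'M[A]_(q, r)) :
  map_mx d (X *m Y) = map_mx d X *m Y + X *m map_mx d Y.
Proof.
apply/matrixP => i j; rewrite !mxE raddf_sum -big_split /=.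
by apply: eq_bigr => l _; rewrite !mxE dM.
Qed.

Lemma map_mx_dd p q (X : 'M[A]_(p, q)) : map_mx d (map_mx d X) = 0.
Proof. by apply/matrixP => i j; rewrite !mxE dd0. Qed.

Lemma addmx_pchar2 p q (X : 'M[A]_(p, q)) : X + X = 0.
Proof. by apply/matrixP => i j; rewrite !mxE addrr_pchar2 // pchar_lalg. Qed.

Lemma lowmx_glmx (X : 'M[A]_(n, m)) F C B (D E : 'M[A]_n) : map_mx d F = 0 ->
  lowmx d X *m glmx d F C B D E =
  glmx d F C (X *m F + B) (map_mx d X *m C + D) (X *m C + E).
Proof.
move=> dF; rewrite /lowmx /glmx mulmx_block !mul1mx !mul0mx !addr0.
rewrite mul_col_mx add_col_mx mul_col_row add_block_mx.
rewrite !map_mxD !map_mx_dM dF map_mx_dd mulmx0 mul0mx addr0 add0r.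
by rewrite addrAC !addrA addmx_pchar2 add0r addrAC.
Qed.

Lemma lowmxD (X Y : 'M[A]_(n, m)) : lowmx d X *m lowmx d Y = lowmx d (X + Y).
Proof.
rewrite /lowmx mulmx_block !mul1mx !mul0mx !mulmx0 !mulmx1 !addr0 add0r.
by rewrite add_col_mx map_mxD.
Qed.

Lemma lowmx0 : lowmx d (0 : 'M[A]_(n, m)) = 1%:M.
Proof. by rewrite /lowmx map_mx0 col_mx0 -scalar_mx_block. Qed.

Lemma lowmxK p (X : 'M[A]_(n, m)) (M : 'M[A]_(m + (n + n), p)) :
  lowmx d (- X) *m (lowmx d X *m M) = M.
Proof. by rewrite mulmxA lowmxD addNr lowmx0 mul1mx. Qed.

Lemma lowmxKV p (X : 'M[A]_(n, m)) (M : 'M[A]_(m + (n + n), p)) :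
  lowmx d X *m (lowmx d (- X) *m M) = M.
Proof. by rewrite -{1}(opprK X) lowmxK. Qed.

Lemma invertible_mxM (M P : 'M[A]_(m + (n + n))) :
  invertible_mx M -> invertible_mx P -> invertible_mx (M *m P).
Proof.
move=> [M1 [MM1 M1M]] [P1 [PP1 P1P]]; exists (P1 *m M1).
by rewrite !mulmxA -(mulmxA M) PP1 mulmx1 MM1 -(mulmxA P1) M1M mulmx1 P1P.
Qed.

Lemma invertible_lowmx (X : 'M[A]_(n, m)) : invertible_mx (lowmx d X).
Proof. by exists (lowmx d (- X)); rewrite !lowmxD subrr addNr lowmx0. Qed.

Lemma in_GL_lowmx_Bmn (X : 'M[A]_(n, m)) (P : 'M[A]_(m + (n + n))) :
  in_Bmn d P -> in_GL d (lowmx d X *m P).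
Proof.
move=> [[F [C [D [E [dF ->]]]]] invP]; split.
  exists F, C, (X *m F + 0), (map_mx d X *m C + D), (X *m C + E).
  by rewrite lowmx_glmx.
by apply: invertible_mxM => //; apply: invertible_lowmx.
Qed.

Lemma in_GL_lowmx_factor (M : 'M[A]_(m + (n + n))) :
  in_GL d M -> exists X P, in_Bmn d P /\ M = lowmx d X *m P.
Proof.
move=> [[F [C [B [D [E [dF eM]]]]]] invM]; have [N [MN _]] := invM.
move: MN; rewrite {1}eM => /(glmx_ul_invertible dF)[G [FG GF]].
exists (B *m G), (lowmx d (- (B *m G)) *m M); split; last by rewrite lowmxKV.
split; last by apply: invertible_mxM => //; apply: invertible_lowmx.
exists F, C, (map_mx d (- (B *m G)) *m C + D), (- (B *m G) *m C + E).
split=> //.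
by rewrite eM lowmx_glmx // mulNmx -mulmxA GF mulmx1 addNr.
Qed.

Lemma lowmx_Bmn_eq0 (X : 'M[A]_(n, m)) (P : 'M[A]_(m + (n + n))) :
  in_Bmn d P -> in_Bmn d (lowmx d X *m P) -> X = 0.
Proof.
move=> [[F [C [D [E [dF ->]]]]] [N [PN _]]] [[F1 [C1 [D1 [E1 [_ +]]]]] _].
rewrite lowmx_glmx // addr0 => /eq_block_mx[_ _ /eq_col_mx[_ XF0] _].
have [G [FG _]] := glmx_ul_invertible dF PN.
by rewrite -[X]mulmx1 -FG mulmxA XF0 mul0mx.
Qed.

End Ver4Algebra.

Theorem mainTheorem3 (k : fieldType) (chk : (2 \in [pchar k])%N)
  (A : algType k) (d : A -> A) (hA : Ver4_comm_alg d) (m n : nat) :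
  (forall (B : 'M[A]_(n, m)) (P : 'M[A]_(m + (n + n))),
      in_Bmn d P -> in_GL d (lowmx d B *m P)) /\
  (forall M : 'M[A]_(m + (n + n)), in_GL d M ->
      exists! BP : 'M[A]_(n, m) * 'M[A]_(m + (n + n)),
        in_Bmn d BP.2 /\ M = lowmx d BP.1 *m BP.2).
Proof.
split=> [B P | M /(in_GL_lowmx_factor hA chk)[B [P [BmnP ->]]]].
  exact: (in_GL_lowmx_Bmn hA chk B).
exists (B, P); split=> // [[B1 P1]] /= [BmnP1 eM].
have eP : P = lowmx d (- B + B1) *m P1.
  by rewrite -(lowmxD hA) -mulmxA -eM (lowmxK hA).
have eB : B1 = B.
  apply/eqP; rewrite -subr_eq0 addrC; apply/eqP.
  by apply: (lowmx_Bmn_eq0 hA chk BmnP1); rewrite -eP.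
by rewrite eB in eM *; rewrite -(lowmxK hA B P) eM (lowmxK hA).
Qed.
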